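(* Let $R\in\{\mathrm{ML},\mathrm{wML},\mathrm{C},\mathrm{S}\}$ and $[p,q]\in\mathscr I$. Then a path $\omega\in\Omega$ is $R$-random for $[p,q]$ if and only if it is $R$-random for at least one precise forecasting system $\varphi$ with $\varphi(s)\subseteq[p,q]$ for all $s\in\mathbb S$.
   Context: Notation: $\mathbb N=\{1,2,\dots\}$, $\mathbb N_0=\mathbb N\cup\{0\}$. $\Omega=\{0,1\}^{\mathbb N}$ is the set of paths $\omega=(\omega_1,\omega_2,\dots)$; $\omega_{1:n}=(\omega_1,\dots,\omega_n)$, $\omega_{1:0}=\square$. $\mathbb S=\bigcup_{n\in\mathbb N_0}\{0,1\}^n$ is the set of situations, $|s|$ the length, $sx$ concatenation. $\mathscr I$ is the set of closed intervals $I\subseteq[0,1]$ (singletons identified with numbers). For $r\in[0,1]$, $f:\{0,1\}\to\mathbb R$: $E_r(f)=rf(1)+(1-r)f(0)$; $\overline E_I(f)=\max_{r\in I}E_r(f)$. A forecasting system is a map $\varphi:\mathbb S\to\mathscr I$; precise if each $\varphi(s)$ is a singleton; a stationary forecasting system with constant value $I$ is identified with $I$. A real process is $F:\mathbb S\to\mathbb R$; $\Delta F(s)$ is $x\mapsto F(sx)-F(s)$. $M$ is a supermartingale for $\varphi$ if $\overline E_{\varphi(s)}(\Delta M(s))\le0$ for all $s$. A test process is a non-negative real process with $F(\square)=1$; a test supermartingale for $\varphi$ is a test process that is a supermartingale for $\varphi$. A multiplier process $D$ assigns to each $s$ a function $D(s):\{0,1\}\to[0,\infty)$ and generates the test process $F(\square)=1$,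 $F(sx)=F(s)D(s)(x)$. Computability: maps from countable effectively encoded domains to $\mathbb N_0$ or $\mathbb Q$ are recursive if Turing-computable; a real map $r$ on a domain $\mathscr D$ is lower semicomputable if $r(d)=\lim_nq(d,n)$ for a recursive rational $q$ non-decreasing in $n$, computable if $|r(d)-q(d,n)|<2^{-n}$ for a recursive rational $q$. $\mathscr F_{\mathrm{ML}}$: lower semicomputable test processes; $\mathscr F_{\mathrm{wML}}$: test processes generated by lower semicomputable multiplier processes; $\mathscr F_{\mathrm C}=\mathscr F_{\mathrm S}$: positive rational-valued recursive test processes. $\overline{\mathbb T}_R(\varphi)$: elements of $\mathscr F_R$ that are test supermartingales for $\varphi$. For $R\in\{\mathrm{ML},\mathrm{wML},\mathrm C\}$, $\omega$ is $R$-random for $\varphi$ if no $T\in\overline{\mathbb T}_R(\varphi)$ has $\limsup_nT(\omega_{1:n})=\infty$. A real growth function is a computable, non-decreasing, unbounded $\tau:\mathbb N_0\to[0,\infty)$; $\omega$ is S-random for $\varphi$ if there are no $T\in\overline{\mathbb T}_{\mathrm S}(\varphi)$ and real growth function $\tau$ with $\limsup_n[T(\omega_{1:n})-\tau(n)]\ge0$. *)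

From Stdlib Require Import Reals List.
From Coquelicot Require Import Coquelicot.
Open Scope R_scope.

(* A path omega = (omega_1, omega_2, ...) is represented by
   w : nat -> bool with omega_{i+1} = w i.  A situation is a finite
   list of bits, in chronological order; s x is  s ++ [x].             *)
Definition sit := list bool.
Definition path := nat -> bool.

Fixpoint prefix (w : path) (n : nat) : sit :=
  match n with
  | O => nil
  | S k => prefix w k ++ (w k :: nil)
  end.

(* Turing computability, modelled by (unary) mu-recursive functions on  *)
(* nat with Cantor pairing.                                            *)
Definition cpair (x y : nat) : nat := Nat.div ((x + y) * (x + y + 1)) 2 + y.

Inductive code : Type :=
| cZero : code
| cSucc : code
| cFst : code
| cSnd : code
| cComp : code -> code -> code
| cPairF : code -> code -> code
| cRec : code -> code -> code
| cMin : code -> code.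

Inductive eval : code -> nat -> nat -> Prop :=
| ev_zero x : eval cZero x 0
| ev_succ x : eval cSucc x (S x)
| ev_fst x y : eval cFst (cpair x y) x
| ev_snd x y : eval cSnd (cpair x y) y
| ev_comp f g x y z : eval g x y -> eval f y z -> eval (cComp f g) x z
| ev_pair f g x y z : eval f x y -> eval g x z -> eval (cPairF f g) x (cpair y z)
| ev_rec0 f g x y : eval f x y -> eval (cRec f g) (cpair x 0) y
| ev_recS f g x n z y :
    eval (cRec f g) (cpair x n) z ->
    eval g (cpair x (cpair n z)) y ->
    eval (cRec f g) (cpair x (S n)) y
| ev_min f x n :
    eval f (cpair x n) 0 ->
    (forall m, (m < n)%nat -> exists k, eval f (cpair x m) (S k)) ->
    eval (cMin f) x n.

Definition recursive_nat (g : nat -> nat) : Prop :=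
  exists c : code, forall x, eval c x (g x).

Definition enc_bool (b : bool) : nat := if b then 1%nat else 0%nat.

Fixpoint enc_sit (s : sit) : nat :=
  match s with
  | nil => 0%nat
  | b :: t => S (cpair (enc_bool b) (enc_sit t))
  end.

Definition recursive_on {D : Type} (enc : D -> nat) (f : D -> nat) : Prop :=
  exists g, recursive_nat g /\ forall d, f d = g (enc d).

Definition recursive_rat {D : Type} (enc : D -> nat) (q : D -> R) : Prop :=
  exists a b c : D -> nat,
    recursive_on enc a /\ recursive_on enc b /\ recursive_on enc c /\
    forall d, q d = (INR (a d) - INR (b d)) / INR (S (c d)).

Definition enc_pair {D : Type} (enc : D -> nat) (dn : D * nat) : nat :=
  cpair (enc (fst dn)) (snd dn).

Definition lower_semicomputable {D : Type} (enc : D -> nat) (r : D -> R) : Prop :=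
  exists q : D * nat -> R,
    recursive_rat (enc_pair enc) q /\
    (forall d n, q (d, n) <= q (d, S n)) /\
    (forall d, is_lim_seq (fun n => q (d, n)) (r d)).

Definition computable_real {D : Type} (enc : D -> nat) (r : D -> R) : Prop :=
  exists q : D * nat -> R,
    recursive_rat (enc_pair enc) q /\
    (forall d n, Rabs (r d - q (d, n)) < / 2 ^ n).

Definition enc_sit_bool (sx : sit * bool) : nat :=
  cpair (enc_sit (fst sx)) (enc_bool (snd sx)).

(* A forecasting system phi : S -> I is given by its lower and upper    *)
(* endpoint functions  phi(s) = [lo s, hi s].                           *)
Definition E (r : R) (f : bool -> R) : R := r * f true + (1 - r) * f false.

(* overline E_{[a,b]}(f) = max_{r in [a,b]} E_r(f) <= 0 *)
Definition upper_E_nonpos (a b : R) (f : bool -> R) : Prop :=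
  forall r, a <= r <= b -> E r f <= 0.

Definition process := sit -> R.

Definition Delta (F : process) (s : sit) : bool -> R :=
  fun x => F (s ++ x :: nil) - F s.

Definition supermartingale (lo hi : sit -> R) (M : process) : Prop :=
  forall s, upper_E_nonpos (lo s) (hi s) (Delta M s).

Definition test_process (F : process) : Prop :=
  (forall s, 0 <= F s) /\ F nil = 1.

Definition multiplier_process (D : sit -> bool -> R) : Prop :=
  forall s x, 0 <= D s x.

Definition generated_by (D : sit -> bool -> R) (F : process) : Prop :=
  F nil = 1 /\ forall s x, F (s ++ x :: nil) = F s * D s x.

Inductive rkind : Type := ML | wML | Cr | Sr.

Definition F_class (k : rkind) (F : process) : Prop :=
  match k with
  | ML => test_process F /\ lower_semicomputable enc_sit F
  | wML => test_process F /\
           exists D, multiplier_process D /\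
             lower_semicomputable enc_sit_bool (fun sx => D (fst sx) (snd sx)) /\
             generated_by D F
  | Cr | Sr => test_process F /\ (forall s, 0 < F s) /\ recursive_rat enc_sit F
  end.

Definition test_supermartingale (k : rkind) (lo hi : sit -> R) (T : process) : Prop :=
  F_class k T /\ supermartingale lo hi T.

Definition real_growth_function (tau : nat -> R) : Prop :=
  computable_real (fun n : nat => n) tau /\
  (forall n, 0 <= tau n) /\
  (forall n, tau n <= tau (S n)) /\
  (forall M, exists n, M < tau n).

Definition random (k : rkind) (lo hi : sit -> R) (w : path) : Prop :=
  match k with
  | ML | wML | Cr =>
      ~ exists T, test_supermartingale k lo hi T /\
          LimSup_seq (fun n => T (prefix w n)) = p_infty
  | Sr =>
      ~ exists T tau, test_supermartingale Sr lo hi T /\ real_growth_function tau /\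
          Rbar_le (Finite 0) (LimSup_seq (fun n => T (prefix w n) - tau n))
  end.

(* The converse implication is immediate: a test supermartingale for [p,q] is one for every
   forecasting system with values in [p,q].

   For the direct implication, enumerate F_R as (T_n); it is countable because each member is
   determined by three codes of mu-recursive functions. A precise phi with values in {p,q} is
   built by diagonalisation. Stage n looks for a situation s, longer than all situations chosen
   at earlier stages, at which T_n violates the supermartingale condition for [p,q]. As E_r(f) is
   affine in r, the violation already occurs at r = p or at r = q, and setting phi(s) to that
   endpoint makes sure T_n is no supermartingale for phi. If there is no such s, then T_n is a
   supermartingale for [p,q] on all situations of length at least some N. Restarting it at
   omega_{1:N+1}, i.e. keeping the value 1 off that cylinder and rescaling it on the cylinder by
   1/(K+1) (by 1/T_n(omega_{1:N+1}) for wML, to keep a multiplier process), gives an element of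
   the class for [p,q] that still succeeds on omega. *)

From Pilot Require Import Defs.
From Stdlib Require Import Reals List.
From Coquelicot Require Import Coquelicot.
Open Scope R_scope.
From Stdlib Require Import Lia Lra Classical ClassicalEpsilon FunctionalExtensionality.
From Stdlib.Arith Require Cantor.

Lemma cpair_to_nat x y : cpair x y = Cantor.to_nat (x, y).
Proof.
  pose proof (Cantor.to_nat_spec x y) as Hspec. unfold cpair.
  rewrite <- (Nat.div_unique_exact ((x + y) * (x + y + 1)) 2 (Cantor.to_nat (x, y) - y)); nia.
Qed.

Definition unpair1 (n : nat) : nat := fst (Cantor.of_nat n).
Definition unpair2 (n : nat) : nat := snd (Cantor.of_nat n).

Lemma unpair1_cpair x y : unpair1 (cpair x y) = x.
Proof. unfold unpair1. now rewrite cpair_to_nat, Cantor.cancel_of_to. Qed.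

Lemma unpair2_cpair x y : unpair2 (cpair x y) = y.
Proof. unfold unpair2. now rewrite cpair_to_nat, Cantor.cancel_of_to. Qed.

#[local] Hint Rewrite unpair1_cpair unpair2_cpair : unpair.

Lemma cpair_unpair n : cpair (unpair1 n) (unpair2 n) = n.
Proof.
  unfold unpair1, unpair2.
  now rewrite cpair_to_nat, <- surjective_pairing, Cantor.cancel_to_of.
Qed.

Lemma cpair_inj x y x' y' : cpair x y = cpair x' y' -> x = x' /\ y = y'.
Proof. rewrite !cpair_to_nat. intro H. apply Cantor.to_nat_inj in H. now injection H. Qed.

Ltac inj_cpair :=
  repeat match goal with
         | H : cpair _ _ = cpair _ _ |- _ => apply cpair_inj in H as [? ?]
         | H : S _ = S _ |- _ => injection H as H
         end;
  subst.

Lemma eval_rec_0 f g x y : eval (cRec f g) (cpair x 0) y -> eval f x y.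
Proof. inversion 1; inj_cpair; [assumption | discriminate]. Qed.

Lemma eval_rec_S f g x n y :
  eval (cRec f g) (cpair x (S n)) y ->
  exists z, eval (cRec f g) (cpair x n) z /\ eval g (cpair x (cpair n z)) y.
Proof. inversion 1; inj_cpair; [discriminate | eauto]. Qed.

Lemma eval_functional c : forall x y y', eval c x y -> eval c x y' -> y = y'.
Proof.
  induction c as [| | | |f IHf g IHg|f IHf g IHg|f IHf g IHg|f IHf]; intros x y y' H H'.
  - inversion H; inversion H'; congruence.
  - inversion H; inversion H'; congruence.
  - inversion H; subst; inversion H'; inj_cpair; reflexivity.
  - inversion H; subst; inversion H'; inj_cpair; reflexivity.
  - inversion H as [| | | |? ? ? z ? Hg Hf| | | |]; subst.
    inversion H' as [| | | |? ? ? z' ? Hg' Hf'| | | |]; subst.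
    assert (z = z') as -> by eauto. eauto.
  - inversion H; subst; inversion H'; subst. f_equal; eauto.
  - assert (Hrec : forall n x y y', eval (cRec f g) (cpair x n) y ->
                   eval (cRec f g) (cpair x n) y' -> y = y').
    { clear x y y' H H'. induction n as [|n IHn]; intros x y y' H H'.
      - apply eval_rec_0 in H, H'. eauto.
      - apply eval_rec_S in H as [z [Hz Hy]], H' as [z' [Hz' Hy']].
        assert (z = z') as -> by eauto. eauto. }
    rewrite <- (cpair_unpair x) in H, H'. eauto.
  - inversion H as [| | | | | | | |? ? ? Hy Hbelow]; subst.
    inversion H' as [| | | | | | | |? ? ? Hy' Hbelow']; subst.
    destruct (Nat.lt_trichotomy y y') as [Hlt|[Heq|Hlt]]; auto.
    + destruct (Hbelow' y Hlt) as [k Hk]. specialize (IHf _ _ _ Hy Hk). discriminate.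
    + destruct (Hbelow y' Hlt) as [k Hk]. specialize (IHf _ _ _ Hy' Hk). discriminate.
Qed.

(** * Closure properties of recursive functions *)

Lemma recursive_nat_ext f g : recursive_nat f -> (forall x, f x = g x) -> recursive_nat g.
Proof. intros [c Hc] Hfg. exists c. intro x. rewrite <- Hfg. apply Hc. Qed.

Lemma recursive_nat_succ : recursive_nat S.
Proof. exists cSucc. intro. constructor. Qed.

Lemma recursive_nat_unpair1 : recursive_nat unpair1.
Proof.
  exists cFst. intro x. pose proof (ev_fst (unpair1 x) (unpair2 x)) as H.
  now rewrite cpair_unpair in H.
Qed.

Lemma recursive_nat_unpair2 : recursive_nat unpair2.
Proof.
  exists cSnd. intro x. pose proof (ev_snd (unpair1 x) (unpair2 x)) as H.
  now rewrite cpair_unpair in H.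
Qed.

Lemma recursive_nat_comp f g :
  recursive_nat f -> recursive_nat g -> recursive_nat (fun x => f (g x)).
Proof. intros [cf Hf] [cg Hg]. exists (cComp cf cg). intro x. econstructor; eauto. Qed.

Lemma recursive_nat_cpair f g :
  recursive_nat f -> recursive_nat g -> recursive_nat (fun x => cpair (f x) (g x)).
Proof. intros [cf Hf] [cg Hg]. exists (cPairF cf cg). intro x. econstructor; eauto. Qed.

Fixpoint prim_rec (f g : nat -> nat) (x n : nat) : nat :=
  match n with
  | O => f x
  | S m => g (cpair x (cpair m (prim_rec f g x m)))
  end.

Lemma recursive_nat_prim_rec f g a n :
  recursive_nat f -> recursive_nat g -> recursive_nat a -> recursive_nat n ->
  recursive_nat (fun x => prim_rec f g (a x) (n x)).
Proof.
  intros [cf Hf] [cg Hg] Ha Hn.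
  assert (Hrec : forall x m, eval (cRec cf cg) (cpair x m) (prim_rec f g x m)).
  { intros x m. induction m; simpl; econstructor; eauto. }
  destruct (recursive_nat_cpair a n Ha Hn) as [c Hc].
  exists (cComp (cRec cf cg) c). intro x. econstructor; eauto.
Qed.

Lemma recursive_nat_id : recursive_nat (fun x => x).
Proof.
  apply (recursive_nat_ext (fun x => cpair (unpair1 x) (unpair2 x))); [|apply cpair_unpair].
  apply recursive_nat_cpair; [apply recursive_nat_unpair1 | apply recursive_nat_unpair2].
Qed.

Lemma recursive_nat_add_const a f : recursive_nat f -> recursive_nat (fun x => a + f x)%nat.
Proof.
  intro Hf. induction a as [|a IHa]; [exact Hf|].
  exact (recursive_nat_comp _ _ recursive_nat_succ IHa).
Qed.

Lemma recursive_nat_const k : recursive_nat (fun _ => k).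
Proof.
  apply (recursive_nat_ext (fun x => k + 0)%nat); [|intro; apply Nat.add_0_r].
  apply recursive_nat_add_const.
  exists cZero. intro. constructor.
Qed.

Lemma recursive_nat_affine a b : recursive_nat (fun x => a * x + b)%nat.
Proof.
  apply (recursive_nat_ext
           (fun x => prim_rec (fun _ => b) (fun z => a + unpair2 (unpair2 z))%nat 0 x)).
  - apply recursive_nat_prim_rec; auto using recursive_nat_const, recursive_nat_id.
    apply recursive_nat_add_const.
    exact (recursive_nat_comp _ _ recursive_nat_unpair2 recursive_nat_unpair2).
  - intro x. induction x as [|x IH]; simpl; autorewrite with unpair; lia.
Qed.

Lemma recursive_nat_if t f g :
  recursive_nat t -> recursive_nat f -> recursive_nat g ->
  recursive_nat (fun x => match t x with O => g x | S _ => f x end).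
Proof.
  intros Ht Hf Hg.
  apply (recursive_nat_ext
           (fun x => prim_rec unpair2 (fun z => unpair1 (unpair1 z)) (cpair (f x) (g x)) (t x))).
  - apply recursive_nat_prim_rec; auto using recursive_nat_cpair, recursive_nat_unpair2.
    apply (recursive_nat_comp _ _ recursive_nat_unpair1 recursive_nat_unpair1).
  - intro x. destruct (t x); simpl; now autorewrite with unpair.
Qed.

Lemma recursive_nat_case k f :
  recursive_nat f -> recursive_nat (fun x => match x with O => k | S m => f m end).
Proof.
  intro Hf.
  apply (recursive_nat_ext
           (fun x => prim_rec (fun _ => k) (fun z => f (unpair1 (unpair2 z))) 0 x)).
  - apply recursive_nat_prim_rec; auto using recursive_nat_const, recursive_nat_id.
    apply (recursive_nat_comp _ _ Hf).
    exact (recursive_nat_comp _ _ recursive_nat_unpair1 recursive_nat_unpair2).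
  - intros [|x]; simpl; now autorewrite with unpair.
Qed.

Lemma recursive_nat_eqb k : recursive_nat (fun x => Nat.b2n (x =? k)).
Proof.
  induction k as [|k IHk].
  - apply (recursive_nat_ext (fun x => match x with O => 1 | S _ => 0 end)%nat).
    + apply recursive_nat_case, recursive_nat_const.
    + now intros [|x].
  - apply (recursive_nat_ext (fun x => match x with O => 0 | S m => Nat.b2n (m =? k) end)%nat).
    + now apply recursive_nat_case.
    + now intros [|x].
Qed.

Section RecursiveOn.

Context {D : Type} (enc : D -> nat).

Lemma recursive_on_const k : recursive_on enc (fun _ => k).
Proof. exists (fun _ => k). split; [apply recursive_nat_const | reflexivity]. Qed.

Lemma recursive_on_map g f :
  recursive_nat g -> recursive_on enc f -> recursive_on enc (fun d => g (f d)).
Proof.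
  intros Hg [h [Hh Hf]]. exists (fun x => g (h x)).
  split; [now apply recursive_nat_comp | intro d; now rewrite Hf].
Qed.

Lemma recursive_on_if (P : D -> bool) f g :
  recursive_on enc (fun d => Nat.b2n (P d)) -> recursive_on enc f -> recursive_on enc g ->
  recursive_on enc (fun d => if P d then f d else g d).
Proof.
  intros [hP [HP EP]] [hf [Hf Ef]] [hg [Hg Eg]].
  exists (fun x => match hP x with O => hg x | S _ => hf x end).
  split; [now apply recursive_nat_if|].
  intro d. rewrite <- EP, <- Ef, <- Eg. now destruct (P d).
Qed.

Lemma recursive_on_pullback {D' : Type} (enc' : D' -> nat) (h : D -> D') e f :
  recursive_nat e -> (forall d, enc' (h d) = e (enc d)) ->
  recursive_on enc' f -> recursive_on enc (fun d => f (h d)).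
Proof.
  intros He Eh [g [Hg Eg]]. exists (fun x => g (e x)).
  split; [now apply recursive_nat_comp | intro d; now rewrite Eg, Eh].
Qed.

Lemma recursive_rat_if (P : D -> bool) q :
  recursive_on enc (fun d => Nat.b2n (P d)) -> recursive_rat enc q ->
  recursive_rat enc (fun d => if P d then q d else 1).
Proof.
  intros HP [a [b [c [Ha [Hb [Hc Hq]]]]]].
  exists (fun d => if P d then a d else 1%nat), (fun d => if P d then b d else 0%nat),
         (fun d => if P d then c d else 0%nat).
  split; [|split; [|split]]; try (apply recursive_on_if; auto using recursive_on_const).
  intro d. destruct (P d); [apply Hq | simpl; field].
Qed.

Lemma recursive_rat_scale q K :
  recursive_rat enc q -> recursive_rat enc (fun d => / INR (S K) * q d).
Proof.
  intros [a [b [c [Ha [Hb [Hc Hq]]]]]].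
  exists a, b, (fun d => S K * c d + K)%nat.
  split; [exact Ha | split; [exact Hb | split]].
  - exact (recursive_on_map (fun x => S K * x + K)%nat c (recursive_nat_affine _ _) Hc).
  - intro d. rewrite Hq.
    replace (S (S K * c d + K)) with (S K * S (c d))%nat by lia.
    rewrite mult_INR. field. split; apply not_0_INR; lia.
Qed.

End RecursiveOn.

Fixpoint is_prefix (u t : sit) : bool :=
  match u, t with
  | nil, _ => true
  | _ :: _, nil => false
  | b :: u', c :: t' => Bool.eqb b c && is_prefix u' t'
  end.

Lemma is_prefixP u t : is_prefix u t = true <-> exists v, t = u ++ v.
Proof.
  revert t. induction u as [|b u IH]; intros [|c t]; simpl.
  - split; eauto.
  - split; eauto.
  - split; [discriminate | intros [v Hv]; discriminate].
  - rewrite Bool.andb_true_iff, IH, Bool.eqb_true_iff. split.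
    + intros [-> [v ->]]. eauto.
    + intros [v Hv]. injection Hv as -> ->. eauto.
Qed.

Lemma is_prefix_snoc u s x : is_prefix u s = true -> is_prefix u (s ++ x :: nil) = true.
Proof.
  rewrite !is_prefixP. intros [v ->]. exists (v ++ x :: nil). now rewrite app_assoc.
Qed.

Lemma is_prefix_length u t : is_prefix u t = true -> (length u <= length t)%nat.
Proof. rewrite is_prefixP. intros [v ->]. rewrite length_app. lia. Qed.

Lemma is_prefix_snoc_new u s x :
  is_prefix u (s ++ x :: nil) = true -> is_prefix u s = false -> u = s ++ x :: nil.
Proof.
  intros Hsx Hs. apply is_prefixP in Hsx as [v Hv].
  destruct v as [|y v] using rev_ind; [now rewrite app_nil_r in Hv|].
  rewrite app_assoc in Hv. apply app_inj_tail in Hv as [-> _].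
  assert (is_prefix u (u ++ v) = true) by (apply is_prefixP; eauto). congruence.
Qed.

Lemma is_prefix_nil u : u <> nil -> is_prefix u nil = false.
Proof. destruct u; [contradiction | reflexivity]. Qed.

Lemma prefix_length w n : length (prefix w n) = n.
Proof. induction n; simpl; [reflexivity|]. rewrite length_app, IHn. simpl. lia. Qed.

Lemma is_prefix_prefix w N n : (N <= n)%nat -> is_prefix (prefix w N) (prefix w n) = true.
Proof.
  induction 1; [apply is_prefixP; exists nil; symmetry; apply app_nil_r | now apply is_prefix_snoc].
Qed.

Lemma recursive_on_is_prefix u : recursive_on enc_sit (fun t => Nat.b2n (is_prefix u t)).
Proof.
  induction u as [|b u [g [Hg Eg]]].
  - exact (recursive_on_const enc_sit 1%nat).
  - exists (fun x => match x with
                     | O => O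
                     | S m => match Nat.b2n (unpair1 m =? enc_bool b) with
                              | O => O
                              | S _ => g (unpair2 m)
                              end
                     end).
    split.
    + apply recursive_nat_case, recursive_nat_if.
      * exact (recursive_nat_comp _ _ (recursive_nat_eqb _) recursive_nat_unpair1).
      * exact (recursive_nat_comp _ _ Hg recursive_nat_unpair2).
      * apply recursive_nat_const.
    + intros [|c t]; [reflexivity|]. simpl enc_sit. cbv iota beta.
      autorewrite with unpair. rewrite <- Eg. now destruct b, c.
Qed.

(** * Countability of the classes [F_class k] *)

Definition rat_code {D : Type} (enc : D -> nat) (ca cb cc : code) (q : D -> R) : Prop :=
  forall d, exists a b c, eval ca (enc d) a /\ eval cb (enc d) b /\ eval cc (enc d) c /\
    q d = (INR a - INR b) / INR (S c).

Lemma rat_code_of_recursive_rat {D : Type} (enc : D -> nat) q :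
  recursive_rat enc q -> exists ca cb cc, rat_code enc ca cb cc q.
Proof.
  intros [a [b [c [[ga [[ca Hca] Ea]] [[gb [[cb Hcb] Eb]] [[gc [[cc Hcc] Ec]] Hq]]]]]].
  exists ca, cb, cc. intro d. exists (a d), (b d), (c d).
  split; [|split; [|split]].
  - rewrite Ea. apply Hca.
  - rewrite Eb. apply Hcb.
  - rewrite Ec. apply Hcc.
  - apply Hq.
Qed.

Lemma rat_code_functional {D : Type} (enc : D -> nat) ca cb cc q q' :
  rat_code enc ca cb cc q -> rat_code enc ca cb cc q' -> forall d, q d = q' d.
Proof.
  intros H H' d.
  destruct (H d) as [a [b [c [Ha [Hb [Hc ->]]]]]].
  destruct (H' d) as [a' [b' [c' [Ha' [Hb' [Hc' ->]]]]]].
  now rewrite (eval_functional _ _ _ _ Ha Ha'), (eval_functional _ _ _ _ Hb Hb'),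
    (eval_functional _ _ _ _ Hc Hc').
Qed.

Lemma is_lim_seq_ext_eq u v (l l' : R) :
  (forall n, u n = v n) -> is_lim_seq u l -> is_lim_seq v l' -> l = l'.
Proof.
  intros Huv Hu Hv. apply is_lim_seq_unique in Hu, Hv.
  rewrite (Lim_seq_ext _ _ Huv), Hv in Hu. now injection Hu.
Qed.

Lemma generated_by_functional D D' T T' :
  (forall s x, D s x = D' s x) -> generated_by D T -> generated_by D' T' -> forall s, T s = T' s.
Proof.
  intros HD [H0 HS] [H0' HS'] s. induction s as [|s x IH] using rev_ind.
  - congruence.
  - now rewrite HS, HS', IH, HD.
Qed.

Definition describes (k : rkind) (ca cb cc : code) (T : process) : Prop :=
  match k with
  | ML => exists q, rat_code (enc_pair enc_sit) ca cb cc q /\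
            forall s, is_lim_seq (fun n => q (s, n)) (T s)
  | wML => exists q (D : sit -> bool -> R), rat_code (enc_pair enc_sit_bool) ca cb cc q /\
            (forall sx, is_lim_seq (fun n => q (sx, n)) (D (fst sx) (snd sx))) /\
            generated_by D T
  | Cr | Sr => rat_code enc_sit ca cb cc T
  end.

Lemma describes_functional k ca cb cc T T' :
  describes k ca cb cc T -> describes k ca cb cc T' -> T = T'.
Proof.
  intros H H'. extensionality s. destruct k; simpl in H, H'.
  - destruct H as [q [Hq Hl]], H' as [q' [Hq' Hl']].
    apply (is_lim_seq_ext_eq _ _ _ _ (fun n => rat_code_functional _ _ _ _ _ _ Hq Hq' (s, n)));
      auto.
  - destruct H as [q [D [Hq [Hl Hg]]]], H' as [q' [D' [Hq' [Hl' Hg']]]].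
    apply (generated_by_functional D D'); auto. intros s' x.
    exact (is_lim_seq_ext_eq _ _ _ _
             (fun n => rat_code_functional _ _ _ _ _ _ Hq Hq' ((s', x), n))
             (Hl (s', x)) (Hl' (s', x))).
  - exact (rat_code_functional _ _ _ _ _ _ H H' s).
  - exact (rat_code_functional _ _ _ _ _ _ H H' s).
Qed.

Lemma F_class_described k T : F_class k T -> exists ca cb cc, describes k ca cb cc T.
Proof.
  destruct k; simpl.
  - intros [_ [q [Hq [_ Hl]]]].
    destruct (rat_code_of_recursive_rat _ _ Hq) as [ca [cb [cc Hc]]].
    exists ca, cb, cc, q. auto.
  - intros [_ [D [_ [[q [Hq [_ Hl]]] Hg]]]].
    destruct (rat_code_of_recursive_rat _ _ Hq) as [ca [cb [cc Hc]]].
    exists ca, cb, cc, q, D. auto.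
  - intros [_ [_ HT]]. now apply rat_code_of_recursive_rat.
  - intros [_ [_ HT]]. now apply rat_code_of_recursive_rat.
Qed.

Fixpoint code_to_nat (c : code) : nat :=
  match c with
  | cZero => cpair 0 0
  | cSucc => cpair 1 0
  | cFst => cpair 2 0
  | cSnd => cpair 3 0
  | cComp f g => cpair 4 (cpair (code_to_nat f) (code_to_nat g))
  | cPairF f g => cpair 5 (cpair (code_to_nat f) (code_to_nat g))
  | cRec f g => cpair 6 (cpair (code_to_nat f) (code_to_nat g))
  | cMin f => cpair 7 (code_to_nat f)
  end.

Lemma code_to_nat_inj c c' : code_to_nat c = code_to_nat c' -> c = c'.
Proof.
  revert c'. induction c; intros []; simpl; intro H; inj_cpair; try discriminate;
    f_equal; auto.
Qed.

Definition codes_to_nat '((ca, cb, cc) : code * code * code) : nat :=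
  cpair (code_to_nat ca) (cpair (code_to_nat cb) (code_to_nat cc)).

Definition codes_of_nat (n : nat) : code * code * code :=
  epsilon (inhabits (cZero, cZero, cZero)) (fun cs => codes_to_nat cs = n).

Lemma codes_of_nat_to_nat cs : codes_of_nat (codes_to_nat cs) = cs.
Proof.
  unfold codes_of_nat.
  pose proof (epsilon_spec (inhabits (cZero, cZero, cZero))
                (fun cs' => codes_to_nat cs' = codes_to_nat cs)
                (ex_intro _ cs eq_refl)) as H.
  destruct epsilon as [[ca cb] cc], cs as [[ca' cb'] cc']. simpl in H.
  apply cpair_inj in H as [Ha Hbc]. apply cpair_inj in Hbc as [Hb Hc].
  apply code_to_nat_inj in Ha, Hb, Hc. now subst.
Qed.

(* Indices whose codes describe no process are sent to an arbitrary process; only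
   surjectivity onto [F_class k] matters. *)
Definition enum_F (k : rkind) (n : nat) : process :=
  let '(ca, cb, cc) := codes_of_nat n in
  epsilon (inhabits (fun _ => 0)) (describes k ca cb cc).

Lemma enum_F_surj k T : F_class k T -> exists n, enum_F k n = T.
Proof.
  intro HT. destruct (F_class_described k T HT) as [ca [cb [cc Hd]]].
  exists (codes_to_nat (ca, cb, cc)). unfold enum_F. rewrite codes_of_nat_to_nat.
  apply (describes_functional k ca cb cc); [apply epsilon_spec; eauto | exact Hd].
Qed.

Definition succeeds (k : rkind) (T : process) (w : path) : Prop :=
  match k with
  | Sr => exists tau, real_growth_function tau /\
            Rbar_le (Finite 0) (LimSup_seq (fun n => T (prefix w n) - tau n))
  | _ => LimSup_seq (fun n => T (prefix w n)) = p_infty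
  end.

Lemma random_iff k lo hi w :
  random k lo hi w <-> ~ exists T, test_supermartingale k lo hi T /\ succeeds k T w.
Proof.
  destruct k; simpl; try tauto.
  split; intros H [T HT]; apply H.
  - destruct HT as [HT [tau Htau]]. exists T, tau. tauto.
  - destruct HT as [tau HT]. exists T. split; [|exists tau]; tauto.
Qed.

Lemma supermartingale_mono (lo hi lo' hi' : sit -> R) M :
  (forall s, lo s <= lo' s /\ hi' s <= hi s) ->
  supermartingale lo hi M -> supermartingale lo' hi' M.
Proof. intros Hsub HM s r Hr. apply HM. specialize (Hsub s). lra. Qed.

Lemma random_mono k (lo hi lo' hi' : sit -> R) w :
  (forall s, lo s <= lo' s /\ hi' s <= hi s) -> random k lo' hi' w -> random k lo hi w.
Proof.
  intros Hsub. rewrite !random_iff. intros Hrand [T [[HT HM] Hsucc]].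
  apply Hrand. exists T. repeat split; eauto using supermartingale_mono.
Qed.

(** * Restarting a test process *)

Lemma inv_INR_S_pos K : 0 < / INR (S K).
Proof. apply Rinv_0_lt_compat, lt_0_INR. lia. Qed.

Definition restart (u : sit) (c : R) (T : process) : process :=
  fun t => if is_prefix u t then c * T t else 1.

Lemma restart_eventually w N c T n :
  (N <= n)%nat -> restart (prefix w N) c T (prefix w n) = c * T (prefix w n).
Proof. intro HN. unfold restart. now rewrite is_prefix_prefix. Qed.

Lemma restart_test_process u c T :
  u <> nil -> 0 <= c -> (forall s, 0 <= T s) -> test_process (restart u c T).
Proof.
  intros Hu Hc HT. split.
  - intro s. unfold restart. destruct (is_prefix u s); [apply Rmult_le_pos|]; auto; lra.
  - unfold restart. now rewrite is_prefix_nil.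
Qed.

Lemma restart_supermartingale (lo hi : sit -> R) u c T :
  (forall s, 0 <= lo s /\ hi s <= 1) -> 0 <= c -> c * T u <= 1 ->
  (forall s, (length u <= length s)%nat -> upper_E_nonpos (lo s) (hi s) (Defs.Delta T s)) ->
  supermartingale lo hi (restart u c T).
Proof.
  intros Hforecast Hc HTu Htail s r Hr. specialize (Hforecast s).
  unfold Defs.Delta, E, restart. destruct (is_prefix u s) eqn:Hs.
  - rewrite !is_prefix_snoc by exact Hs.
    pose proof (Htail s (is_prefix_length _ _ Hs) r Hr) as H. unfold Defs.Delta, E in H. nra.
  - assert (Hchild : forall x,
               (if is_prefix u (s ++ x :: nil) then c * T (s ++ x :: nil) else 1) <= 1).
    { intro x. destruct (is_prefix u (s ++ x :: nil)) eqn:Hsx; [|lra].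
      now rewrite <- (is_prefix_snoc_new _ _ _ Hsx Hs). }
    pose proof (Hchild true). pose proof (Hchild false). nra.
Qed.

Lemma lower_semicomputable_restart u K T :
  lower_semicomputable enc_sit T -> lower_semicomputable enc_sit (restart u (/ INR (S K)) T).
Proof.
  intros [q [Hq [Hmono Hlim]]].
  exists (fun d => if is_prefix u (fst d) then / INR (S K) * q d else 1).
  split; [|split].
  - apply recursive_rat_if; [|now apply recursive_rat_scale].
    apply (recursive_on_pullback _ enc_sit fst unpair1 (fun t => Nat.b2n (is_prefix u t))).
    + apply recursive_nat_unpair1.
    + intros []. symmetry. apply unpair1_cpair.
    + apply recursive_on_is_prefix.
  - intros s n. cbn [fst]. destruct (is_prefix u s); [|lra].
    apply Rmult_le_compat_l; [left; apply inv_INR_S_pos | apply Hmono].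
  - intro s. unfold restart. cbn [fst]. destruct (is_prefix u s).
    + exact (is_lim_seq_scal_l _ _ _ (Hlim s)).
    + apply is_lim_seq_const.
Qed.

Lemma positive_rational_restart u K T :
  u <> nil -> test_process T -> (forall s, 0 < T s) -> recursive_rat enc_sit T ->
  test_process (restart u (/ INR (S K)) T) /\ (forall s, 0 < restart u (/ INR (S K)) T s) /\
  recursive_rat enc_sit (restart u (/ INR (S K)) T).
Proof.
  intros Hu [HT0 _] Hpos Hrat.
  pose proof (inv_INR_S_pos K) as HK.
  split; [|split].
  - apply restart_test_process; auto. lra.
  - intro s. unfold restart. destruct (is_prefix u s); [apply Rmult_lt_0_compat|]; auto; lra.
  - apply recursive_rat_if; [apply recursive_on_is_prefix | now apply recursive_rat_scale].
Qed.

Lemma F_class_restart k u K T :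
  k <> wML -> u <> nil -> F_class k T -> F_class k (restart u (/ INR (S K)) T).
Proof.
  intros Hk Hu HT. destruct k; [| contradiction | |]; simpl in HT |- *.
  - destruct HT as [[HT0 _] Hlsc]. split; [|now apply lower_semicomputable_restart].
    apply restart_test_process; auto. left. apply inv_INR_S_pos.
  - destruct HT as [HT [Hpos Hrat]]. now apply positive_rational_restart.
  - destruct HT as [HT [Hpos Hrat]]. now apply positive_rational_restart.
Qed.

Definition restart_multiplier (u : sit) (D : sit -> bool -> R) : sit -> bool -> R :=
  fun s x => if is_prefix u s then D s x else 1.

Lemma generated_by_restart u D T :
  u <> nil -> T u <> 0 -> generated_by D T ->
  generated_by (restart_multiplier u D) (restart u (/ T u) T).
Proof.
  intros Hu HTu [H0 HS]. unfold restart, restart_multiplier. split.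
  - now rewrite is_prefix_nil.
  - intros s x. destruct (is_prefix u s) eqn:Hs.
    + rewrite is_prefix_snoc, HS by exact Hs. ring.
    + destruct (is_prefix u (s ++ x :: nil)) eqn:Hsx; [|ring].
      rewrite <- (is_prefix_snoc_new _ _ _ Hsx Hs). field. exact HTu.
Qed.

Lemma lower_semicomputable_restart_multiplier u (D : sit -> bool -> R) :
  lower_semicomputable enc_sit_bool (fun sx => D (fst sx) (snd sx)) ->
  lower_semicomputable enc_sit_bool (fun sx => restart_multiplier u D (fst sx) (snd sx)).
Proof.
  intros [q [Hq [Hmono Hlim]]].
  exists (fun d => if is_prefix u (fst (fst d)) then q d else 1).
  split; [|split].
  - apply recursive_rat_if; [|exact Hq].
    apply (recursive_on_pullback _ enc_sit (fun d => fst (fst d)) (fun x => unpair1 (unpair1 x))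
             (fun t => Nat.b2n (is_prefix u t))).
    + apply (recursive_nat_comp _ _ recursive_nat_unpair1 recursive_nat_unpair1).
    + intros [[s x] n]. unfold enc_pair, enc_sit_bool. simpl. now autorewrite with unpair.
    + apply recursive_on_is_prefix.
  - intros [s x] n. simpl. destruct (is_prefix u s); [apply Hmono | lra].
  - intros [s x]. unfold restart_multiplier. simpl. destruct (is_prefix u s).
    + exact (Hlim (s, x)).
    + apply is_lim_seq_const.
Qed.

Lemma F_class_restart_wML u T :
  u <> nil -> T u <> 0 -> F_class wML T -> F_class wML (restart u (/ T u) T).
Proof.
  intros Hu HTu [[HT0 _] [D [HD [Hlsc Hgen]]]]. split.
  - apply restart_test_process; auto.
    left. apply Rinv_0_lt_compat. pose proof (HT0 u). lra.
  - exists (restart_multiplier u D). split; [|split].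
    + intros s x. unfold restart_multiplier. destruct (is_prefix u s); [apply HD | lra].
    + now apply lower_semicomputable_restart_multiplier.
    + now apply generated_by_restart.
Qed.

Lemma LimSup_seq_scal_eventually (c : R) u v :
  0 < c -> (exists N, forall n, (N <= n)%nat -> v n = c * u n) ->
  LimSup_seq v = Rbar_mult c (LimSup_seq u).
Proof.
  intros Hc [N HN]. destruct (ex_LimSup_seq u) as [l Hl].
  rewrite (is_LimSup_seq_unique _ _ Hl). apply is_LimSup_seq_unique.
  apply (is_LimSup_seq_ext_loc (fun n => c * u n)); [|now apply is_LimSup_seq_scal_pos].
  exists N. intros n Hn. symmetry. auto.
Qed.

Lemma Rbar_mult_p_infty (c : R) : 0 < c -> Rbar_mult c p_infty = p_infty.
Proof. intro Hc. apply is_Rbar_mult_unique, is_Rbar_mult_sym, is_Rbar_mult_p_infty_pos, Hc. Qed.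

Lemma Rbar_le_0_mult (c : R) l : 0 < c -> Rbar_le 0 l -> Rbar_le 0 (Rbar_mult c l).
Proof.
  intros Hc Hl. destruct l as [l| |].
  - simpl in *. apply Rmult_le_pos; lra.
  - now rewrite Rbar_mult_p_infty.
  - contradiction.
Qed.

Lemma succeeds_restart k w N c T :
  k <> Sr -> 0 < c -> succeeds k T w -> succeeds k (restart (prefix w N) c T) w.
Proof.
  intros Hk Hc Hsucc.
  assert (Hlim : LimSup_seq (fun n => restart (prefix w N) c T (prefix w n))
                 = Rbar_mult c (LimSup_seq (fun n => T (prefix w n)))).
  { apply LimSup_seq_scal_eventually; [exact Hc|]. exists N. apply restart_eventually. }
  destruct k; [| | | contradiction]; simpl in *; rewrite Hlim, Hsucc; now apply Rbar_mult_p_infty.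
Qed.

Lemma real_growth_function_scale tau K :
  real_growth_function tau -> real_growth_function (fun n => / INR (S K) * tau n).
Proof.
  intros [[q [Hq Happrox]] [Hnonneg [Hmono Hunb]]].
  pose proof (inv_INR_S_pos K) as HK.
  assert (HK1 : / INR (S K) <= 1).
  { rewrite <- Rinv_1. apply Rinv_le_contravar; [lra|]. apply (le_INR 1). lia. }
  split; [|split; [|split]].
  - exists (fun d => / INR (S K) * q d). split; [now apply recursive_rat_scale|].
    intros d n. rewrite <- Rmult_minus_distr_l, Rabs_mult, (Rabs_pos_eq (/ INR (S K))) by lra.
    specialize (Happrox d n). pose proof (Rabs_pos (tau d - q (d, n))). nra.
  - intro n. specialize (Hnonneg n). nra.
  - intro n. apply Rmult_le_compat_l; [lra | apply Hmono].
  - intro M. destruct (Hunb (INR (S K) * M)) as [n Hn]. exists n.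
    apply (Rmult_lt_reg_l (INR (S K))); [apply lt_0_INR; lia|].
    rewrite <- Rmult_assoc, Rinv_r, Rmult_1_l; [lra | apply not_0_INR; lia].
Qed.

Lemma succeeds_restart_Sr w N K T :
  succeeds Sr T w -> succeeds Sr (restart (prefix w N) (/ INR (S K)) T) w.
Proof.
  intros [tau [Htau Hsucc]]. pose proof (inv_INR_S_pos K) as HK.
  exists (fun n => / INR (S K) * tau n). split; [now apply real_growth_function_scale|].
  rewrite (LimSup_seq_scal_eventually (/ INR (S K)) (fun n => T (prefix w n) - tau n));
    [| exact HK |].
  - now apply Rbar_le_0_mult.
  - exists N. intros n Hn. rewrite restart_eventually by exact Hn. ring.
Qed.

Lemma succeeds_wML_prefix_pos w N T :
  F_class wML T -> succeeds wML T w -> 0 < T (prefix w N).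
Proof.
  intros [[HT0 _] [D [_ [_ [_ HS]]]]] Hsucc. simpl in Hsucc.
  destruct (HT0 (prefix w N)) as [|Hz]; [assumption|]. exfalso.
  assert (Hzero : LimSup_seq (fun n => T (prefix w n)) = 0).
  { apply is_LimSup_seq_unique, (is_LimSup_seq_ext_loc (fun _ => 0)); [|apply is_LimSup_seq_const].
    exists N. intros n Hn. induction Hn; [exact Hz|]. simpl. rewrite HS, <- IHHn. ring. }
  congruence.
Qed.

Proposition eventual_supermartingale_restart k p q w N T :
  0 <= p -> q <= 1 -> F_class k T -> succeeds k T w ->
  (forall s, (N <= length s)%nat -> upper_E_nonpos p q (Defs.Delta T s)) ->
  exists T', test_supermartingale k (fun _ => p) (fun _ => q) T' /\ succeeds k T' w.
Proof.
  intros Hp Hq HT Hsucc Htail.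
  set (u := prefix w (S N)).
  assert (Hu : u <> nil).
  { intro Hnil. pose proof (prefix_length w (S N)) as Hlen. fold u in Hlen.
    now rewrite Hnil in Hlen. }
  assert (Hsm : forall c, 0 <= c -> c * T u <= 1 ->
                supermartingale (fun _ => p) (fun _ => q) (restart u c T)).
  { intros c Hc HcT. apply restart_supermartingale; auto.
    intros s Hs. apply Htail. unfold u in Hs. rewrite prefix_length in Hs. lia. }
  assert (Hscaled : k <> wML ->
          exists T', test_supermartingale k (fun _ => p) (fun _ => q) T' /\ succeeds k T' w).
  { intro Hk. destruct (INR_unbounded (T u)) as [K HK].
    exists (restart u (/ INR (S K)) T). split; [split|].
    - now apply F_class_restart.
    - apply Hsm; [left; apply inv_INR_S_pos|].
      rewrite <- (Rinv_l (INR (S K))) by (apply not_0_INR; lia).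
      apply Rmult_le_compat_l; [left; apply inv_INR_S_pos | rewrite S_INR; lra].
    - destruct k; [| contradiction | |].
      + apply succeeds_restart; auto using inv_INR_S_pos. discriminate.
      + apply succeeds_restart; auto using inv_INR_S_pos. discriminate.
      + now apply succeeds_restart_Sr. }
  destruct k; try (apply Hscaled; discriminate).
  pose proof (succeeds_wML_prefix_pos w (S N) T HT Hsucc) as HTu. fold u in HTu.
  exists (restart u (/ T u) T). split; [split|].
  - apply F_class_restart_wML; auto. lra.
  - apply Hsm; [left; now apply Rinv_0_lt_compat | rewrite Rinv_l; lra].
  - apply succeeds_restart; [discriminate | now apply Rinv_0_lt_compat | exact Hsucc].
Qed.

(** * The diagonal forecasting system *)

Lemma upper_E_nonpos_endpoints a b f : E a f <= 0 -> E b f <= 0 -> upper_E_nonpos a b f.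
Proof.
  intros Ha Hb r Hr. unfold E in *.
  destruct (Rle_dec (f false) (f true)).
  - assert (0 <= (b - r) * (f true - f false)) by (apply Rmult_le_pos; lra). nra.
  - assert (0 <= (r - a) * (f false - f true)) by (apply Rmult_le_pos; lra). nra.
Qed.

Section Diagonal.

Variables (p q : R) (T : nat -> process).

Definition violation_choice (n b : nat) (o : option sit) : Prop :=
  match o with
  | Some s => (b < length s)%nat /\ ~ upper_E_nonpos p q (Defs.Delta (T n) s)
  | None => forall s, (b < length s)%nat -> upper_E_nonpos p q (Defs.Delta (T n) s)
  end.

Definition next_violation (n b : nat) : option sit :=
  epsilon (inhabits None) (violation_choice n b).

Lemma next_violation_spec n b : violation_choice n b (next_violation n b).
Proof.
  unfold next_violation. apply epsilon_spec.
  destruct (classic (exists s, (b < length s)%nat /\ ~ upper_E_nonpos p q (Defs.Delta (T n) s)))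
    as [[s Hs] | Hnone].
  - now exists (Some s).
  - exists None. intros s Hs. apply NNPP. eauto.
Qed.

Fixpoint depth (n : nat) : nat :=
  match n with
  | O => O
  | S m => match next_violation m (depth m) with
           | Some s => length s
           | None => depth m
           end
  end.

Definition chosen (n : nat) : option sit := next_violation n (depth n).

Lemma depth_le n m : (n <= m)%nat -> (depth n <= depth m)%nat.
Proof.
  induction 1 as [|m _ IH]; [lia|]. simpl.
  pose proof (next_violation_spec m (depth m)) as Hspec.
  destruct (next_violation m (depth m)); [destruct Hspec|]; lia.
Qed.

Lemma chosen_inj n m s : chosen n = Some s -> chosen m = Some s -> n = m.
Proof.
  assert (Hlt : forall a b, chosen a = Some s -> chosen b = Some s -> (a < b)%nat -> False).
  { intros a b Ha Hb Hab. pose proof (depth_le _ _ Hab) as Hdepth. simpl in Hdepth.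
    pose proof (next_violation_spec b (depth b)) as Hspec.
    unfold chosen in Ha, Hb. rewrite Ha in Hdepth. rewrite Hb in Hspec. simpl in Hspec. lia. }
  intros Hn Hm.
  destruct (Nat.lt_trichotomy n m) as [H|[H|H]]; [exfalso; eauto | exact H | exfalso; eauto].
Qed.

Definition diagonal_forecast (s : sit) : R :=
  if excluded_middle_informative (exists n, chosen n = Some s /\ 0 < E p (Defs.Delta (T n) s))
  then p else q.

Lemma diagonal_forecast_cases s : diagonal_forecast s = p \/ diagonal_forecast s = q.
Proof. unfold diagonal_forecast. destruct excluded_middle_informative; auto. Qed.

Lemma diagonal_forecast_defeats n :
  supermartingale diagonal_forecast diagonal_forecast (T n) ->
  exists N, forall s, (N <= length s)%nat -> upper_E_nonpos p q (Defs.Delta (T n) s).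
Proof.
  intro Hsm. pose proof (next_violation_spec n (depth n)) as Hspec. fold (chosen n) in Hspec.
  destruct (chosen n) as [s|] eqn:Hs.
  - exfalso. destruct Hspec as [_ Hviol]. apply Hviol.
    assert (Hphi : E (diagonal_forecast s) (Defs.Delta (T n) s) <= 0) by (apply Hsm; lra).
    unfold diagonal_forecast in Hphi.
    destruct excluded_middle_informative as [[m [Hm Hpos]] | Hnot].
    + rewrite (chosen_inj _ _ _ Hm Hs) in Hpos. lra.
    + apply upper_E_nonpos_endpoints; [|exact Hphi]. apply Rnot_lt_le. intro Hpos. eauto.
  - exists (S (depth n)). intros s Hlen. apply Hspec. lia.
Qed.

End Diagonal.

Theorem corollary14 (k : rkind) (p q : R) (w : path) :
  0 <= p -> p <= q -> q <= 1 ->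
  (random k (fun _ => p) (fun _ => q) w <->
   exists phi : sit -> R,
     (forall s, p <= phi s <= q) /\ random k phi phi w).
Proof.
  intros Hp Hpq Hq. split.
  - intro Hrand. exists (diagonal_forecast p q (enum_F k)). split.
    { intro s. destruct (diagonal_forecast_cases p q (enum_F k) s) as [-> | ->]; lra. }
    apply random_iff. intros [T [[HT Hsm] Hsucc]].
    destruct (enum_F_surj k T HT) as [n <-].
    destruct (diagonal_forecast_defeats p q (enum_F k) n Hsm) as [N Htail].
    apply random_iff in Hrand. apply Hrand.
    exact (eventual_supermartingale_restart k p q w N _ Hp Hq HT Hsucc Htail).
  - intros [phi [Hphi Hrand]]. apply (random_mono k _ _ phi phi w); [|exact Hrand].
    intro s. specialize (Hphi s). lra.
Qed.
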